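(* Let $V$ be a Whittaker module of type $\eta$ over $R$ with cyclic Whittaker vector $w$, and suppose $Z_V=(p(\Omega)^n)$ where $p$ is an irreducible polynomial and $n\ge1$. Then $V$ has a unique maximal submodule, namely $V_1=Rp(\Omega)w$.
   Context: Let $f\in\mathbb{C}[H]$ be a polynomial. $R=R(f)$ is the associative $\mathbb{C}$-algebra generated by $E,F,H$ with relations $EF-FE=f(H)$, $HE-EH=E$, $HF-FH=-F$. Let $u\in\mathbb{C}[H]$ satisfy $f(H)=\tfrac12(u(H+1)-u(H))$ and $\Omega=2FE+u(H+1)$; the center $Z(R)$ is the polynomial ring $\mathbb{C}[\Omega]$. Let $R(E)=\mathbb{C}[E]$ and fix an algebra homomorphism $\eta:R(E)\to\mathbb{C}$ with $\eta(E)\neq0$. A vector $v$ of an $R$-module $V$ is a Whittaker vector of type $\eta$ if $Ev=\eta(E)v$; $V$ is a Whittaker module of type $\eta$ with cyclic Whittaker vector $w$ if $w$ is a Whittaker vector and $V=Rw$. $Z_V=\mathrm{Ann}_R(V)\cap Z(R)$. *)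

From HB Require Import structures.
From mathcomp Require Import all_boot all_order all_algebra.
From mathcomp Require Import reals.
From mathcomp.real_closed Require Import complex.
Set Implicit Arguments. Unset Strict Implicit. Unset Printing Implicit Defensive.
Import Order.TTheory GRing.Theory Num.Theory.
Local Open Scope ring_scope.

Definition pact (K : nzRingType) (V : lmodType K) (T : V -> V) (q : {poly K}) (v : V) : V :=
  \sum_(i < size q) q`_i *: iter i T v.

(* Submodules of the R(f)-module V, where E, F, H act as the given operators. *)
Definition submod (K : nzRingType) (V : lmodType K) (E F H : V -> V) (M : V -> Prop) : Prop :=
  [/\ M 0, (forall x y, M x -> M y -> M (x + y)),
      (forall (a : K) x, M x -> M (a *: x)) &
      (forall x, M x -> [/\ M (E x), M (F x) & M (H x)])].

Definition gensub (K : nzRingType) (V : lmodType K) (E F H : V -> V) (v : V) : V -> Prop :=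
  fun x => forall M, submod E F H M -> M v -> M x.

Definition maxsub (K : nzRingType) (V : lmodType K) (E F H : V -> V) (M : V -> Prop) : Prop :=
  [/\ submod E F H M, (exists x, ~ M x) &
      forall N, submod E F H N -> (forall x, M x -> N x) ->
        (forall x, N x -> M x) \/ (forall x, N x)].

Definition Omega (K : nzRingType) (V : lmodType K) (E F H : V -> V) (u : {poly K}) (v : V) : V :=
  2%:R *: F (E v) + pact H (u \Po ('X + 1)) v.

From HB Require Import structures.
From mathcomp Require Import all_boot all_order all_algebra.
From mathcomp Require Import reals.
From mathcomp.real_closed Require Import complex.
From Stdlib Require Import Classical.
Import GRing.Theory Num.Theory.
Set Implicit Arguments. Unset Strict Implicit. Unset Printing Implicit Defensive.
Local Open Scope ring_scope.

(* Write P := p(Omega); Omega is central, so P commutes with E, F, H and P V is a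
   submodule, equal to R P w.  Over the algebraically closed field p is linear, so
   Omega w, and then F w = (2 eta)^-1 (Omega w - u(H+1) w), lie in K[H] w + P V; this
   space is therefore a submodule containing w, i.e. all of V.  If a submodule N
   contains some x = g(H) w + P v outside P V, then g <> 0, and since
   (E - eta) g(H) w = eta (g(H-1) - g(H)) w lowers the degree of g (in characteristic 0),
   repeating it shows w in N + P V, hence N + P V = V.  As P^n = p(Omega)^n = 0 on V,
   iterating gives N = V.  Finally w is not in P V: otherwise V = P V = 0, so
   p^n would divide 1.  Thus every proper submodule lies in P V, which is proper. *)

Section PolyAction.
Variables (K : comNzRingType) (V : lmodType K).
Implicit Types (T : V -> V) (q r : {poly K}) (v : V).

Lemma pact_widen T q v N : (size q <= N)%N ->
  pact T q v = \sum_(i < N) q`_i *: iter i T v.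
Proof.
move=> hN; rewrite /pact (big_ord_widen N (fun i => q`_i *: iter i T v) hN).
rewrite big_mkcond /=; apply: eq_bigr => i _; case: ifP => // /negbT.
by rewrite -leqNgt => hi; rewrite nth_default ?scale0r.
Qed.

Lemma pact0 T v : pact T 0 v = 0.
Proof. by rewrite /pact size_poly0 big_ord0. Qed.

Lemma pactD T q r v : pact T (q + r) v = pact T q v + pact T r v.
Proof.
set N := maxn (size q) (size r).
rewrite !(@pact_widen _ _ _ N) ?leq_maxl ?leq_maxr ?size_polyD //.
by rewrite -big_split; apply: eq_bigr => i _; rewrite coefD scalerDl.
Qed.

Lemma pactZ T c q v : pact T (c *: q) v = c *: pact T q v.
Proof.
rewrite !(@pact_widen _ _ _ (size q)) ?size_scale_leq //.
by rewrite scaler_sumr; apply: eq_bigr => i _; rewrite coefZ scalerA.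
Qed.

Lemma pactN T q v : pact T (- q) v = - pact T q v.
Proof. by rewrite -(scaleN1r q) pactZ scaleN1r. Qed.

Lemma pactB T q r v : pact T (q - r) v = pact T q v - pact T r v.
Proof. by rewrite pactD pactN. Qed.

Lemma pactC T c v : pact T c%:P v = c *: v.
Proof. by rewrite (@pact_widen _ _ _ 1) ?size_polyC_leq1 // big_ord1 coefC. Qed.

Lemma pact1 T v : pact T 1 v = v.
Proof. by rewrite -polyC1 pactC scale1r. Qed.

Lemma pactMX T q v : pact T (q * 'X) v = pact T q (T v).
Proof.
rewrite (@pact_widen _ _ _ (size q).+1); last first.
  by rewrite (leq_trans (size_polyMleq _ _)) // size_polyX addn2.
rewrite big_ord_recl coefMX /= scale0r add0r.
by apply: eq_bigr => i _; rewrite coefMX /= -iterSr.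
Qed.

Lemma pactX T v : pact T 'X v = T v.
Proof. by rewrite -['X]mul1r pactMX pact1. Qed.

Lemma pact_size2 T q v : (size q <= 2)%N -> pact T q v = q`_0 *: v + q`_1 *: T v.
Proof. by move=> hq; rewrite (pact_widen _ _ hq) !big_ord_recl big_ord0 addr0. Qed.

Lemma pact_stable (M : V -> Prop) T q v : M 0 ->
  (forall x y, M x -> M y -> M (x + y)) -> (forall a x, M x -> M (a *: x)) ->
  (forall x, M x -> M (T x)) -> M v -> M (pact T q v).
Proof.
move=> M0 MD MZ MT Mv; apply: (big_rec M) => // i y _ My; apply: MD => //.
by apply: MZ; elim: (nat_of_ord i) => //= k; exact: MT.
Qed.

Lemma pact_is_linear (T : {linear V -> V}) q : linear (pact T q).
Proof.
have iterP k : linear (iter k T).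
  by elim: k => // k IH a x y; rewrite !iterS IH linearP.
move=> a x y; rewrite /pact scaler_sumr -big_split; apply: eq_bigr => i _.
by rewrite iterP scalerDr !scalerA mulrC.
Qed.

HB.instance Definition _ (T : {linear V -> V}) q :=
  GRing.isLinear.Build K V V *:%R (pact T q) (pact_is_linear T q).

Lemma pact_intertwine (S : {linear V -> V}) T T' q v :
  (forall x, S (T x) = T' (S x)) -> S (pact T q v) = pact T' q (S v).
Proof.
move=> ST; rewrite /pact linear_sum; apply: eq_bigr => i _; rewrite linearZZ.
by congr (_ *: _); elim: (nat_of_ord i) => //= k <-.
Qed.

Lemma pactM (T : {linear V -> V}) q r v : pact T (q * r) v = pact T q (pact T r v).
Proof.
elim/poly_ind: q v => [|q c IH] v; first by rewrite mul0r !pact0.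
rewrite mulrDl -mulrA -(commr_polyX r) mulrA mul_polyC !pactD pactZ pactC.
by rewrite !pactMX IH (@pact_intertwine T T T).
Qed.

Lemma pactXn (T : {linear V -> V}) q k v : pact T (q ^+ k) v = iter k (pact T q) v.
Proof. by elim: k => [|k IH] /=; rewrite ?pact1 // exprS pactM IH. Qed.

Lemma pact_comp (T : {linear V -> V}) g q v : pact T (g \Po q) v = pact (pact T q) g v.
Proof.
elim/poly_ind: g v => [|g c IH] v; first by rewrite comp_poly0 !pact0.
by rewrite comp_polyD comp_polyM comp_polyX comp_polyC !pactD pactM IH !pactC pactMX.
Qed.

Lemma pact_comm (T T' : {linear V -> V}) q r v : (forall x, T (T' x) = T' (T x)) ->
  pact T q (pact T' r v) = pact T' r (pact T q v).
Proof.
move=> TT'; apply: pact_intertwine => x; symmetry; exact: pact_intertwine.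
Qed.

End PolyAction.

Section Submodules.
Variables (K : nzRingType) (V : lmodType K) (E F H : {linear V -> V}).

Lemma submod0 : submod E F H (fun x => x = 0).
Proof. by split=> [|x y -> ->|a x ->|x ->]; rewrite ?addr0 ?scaler0 ?linear0. Qed.

Lemma gensub_submod v : submod E F H (gensub E F H v).
Proof.
split.
- by move=> M [].
- by move=> x y hx hy M hM hv; case: (hM) => _ MD _ _; exact: MD (hx M hM hv) (hy M hM hv).
- by move=> a x hx M hM hv; case: (hM) => _ _ MZ _; exact: MZ (hx M hM hv).
- by move=> x hx; split=> M hM hv; case: (hM) => _ _ _ /(_ x (hx M hM hv)) [].
Qed.

Lemma maxsub_unique W : submod E F H W -> (exists x, ~ W x) ->
  (forall N, submod E F H N -> (forall x, N x -> W x) \/ (forall x, N x)) ->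
  maxsub E F H W /\ (forall M, maxsub E F H M -> forall x, M x <-> W x).
Proof.
move=> hW Wproper dich; split; first by split=> // N hN _; exact: dich.
move=> M [hM [y My] maxM].
have sMW : forall x, M x -> W x by case: (dich M hM) => // /(_ y).
move=> x; split; first exact: sMW.
case: (maxM W hW sMW) => [|Wfull]; first exact.
by case: Wproper => z; have := Wfull z.
Qed.

Section CommutingOperator.
Variable T : {linear V -> V}.
Hypotheses (TE : forall x, T (E x) = E (T x)) (TF : forall x, T (F x) = F (T x))
  (TH : forall x, T (H x) = H (T x)).

Lemma submod_image : submod E F H (fun x => exists v, x = T v).
Proof.
split.
- by exists 0; rewrite linear0.
- by move=> _ _ [x ->] [y ->]; exists (x + y); rewrite linearD.
- by move=> a _ [x ->]; exists (a *: x); rewrite linearZZ.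
- by move=> _ [x ->]; split; [exists (E x) | exists (F x) | exists (H x)].
Qed.

Lemma submod_addr_image N : submod E F H N ->
  submod E F H (fun x => exists m v, N m /\ x = m + T v).
Proof.
case=> N0 ND NZ NEFH; split.
- by exists 0, 0; rewrite linear0 addr0.
- move=> _ _ [m [v [Nm ->]]] [m' [v' [Nm' ->]]].
  by exists (m + m'), (v + v'); rewrite linearD addrACA; split; first exact: ND.
- move=> a _ [m [v [Nm ->]]].
  by exists (a *: m), (a *: v); rewrite linearZZ scalerDr; split; first exact: NZ.
- move=> _ [m [v [Nm ->]]]; have [NEm NFm NHm] := NEFH m Nm.
  split; [exists (E m), (E v) | exists (F m), (F v) | exists (H m), (H v)];
    by split=> //; rewrite linearD ?TE ?TF ?TH.
Qed.

Lemma submod_preimage M : submod E F H M -> submod E F H (fun v => M (T v)).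
Proof.
case=> M0 MD MZ MEFH; split.
- by rewrite linear0.
- by move=> x y Mx My; rewrite linearD; exact: MD.
- by move=> a x Mx; rewrite linearZZ; exact: MZ.
- by move=> x /MEFH[? ? ?]; rewrite TE TF TH.
Qed.

End CommutingOperator.
End Submodules.

Lemma addr_image_nilpotent_full (V : zmodType) (N : V -> Prop) (T : {additive V -> V}) n :
  N 0 -> (forall x y, N x -> N y -> N (x + y)) -> (forall x, N x -> N (T x)) ->
  (forall v, iter n T v = 0) -> (forall x, exists m v, N m /\ x = m + T v) ->
  forall x, N x.
Proof.
move=> N0 ND NT Tn cover.
have iterD k : {morph iter k T : x y / x + y}.
  by elim: k => // k IH x y; rewrite !iterS IH raddfD.
have N_iter k x : N x -> N (iter k T x) by elim: k => //= k IH /IH; exact: NT.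
suff cover_iter k x : exists m v, N m /\ x = m + iter k T v.
  by move=> x; have [m [v [Nm ->]]] := cover_iter n x; rewrite Tn addr0.
elim: k x => [|k IH] x; first by exists 0, x; rewrite add0r.
have [m [v [Nm ->]]] := IH x; have [m' [v' [Nm' ->]]] := cover v.
exists (m + iter k T m'), v'; split; first by apply: ND => //; exact: N_iter.
by rewrite iterD addrA -iterSr.
Qed.

Section BackwardDifference.
Variable K : numDomainType.
Implicit Type g : {poly K}.

Lemma size_comp_XsubC1_sub g :
  (1 < size g)%N -> (size (g \Po ('X - 1) - g)%R < size g)%N.
Proof.
move=> g_gt1; rewrite -polyC1.
have size_shift : size (g \Po ('X - 1%:P)) = size g by rewrite size_comp_poly2 // size_XsubC.
have lead_shift : lead_coef (g \Po ('X - 1%:P)) = lead_coef g.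
  by rewrite lead_coef_comp ?size_XsubC // lead_coefXsubC expr1n mulr1.
rewrite -(prednK (ltnW g_gt1)) ltnS; apply/leq_sizeP => j; rewrite leq_eqVlt coefB.
case/orP=> [/eqP <-|hj].
  by move: lead_shift; rewrite !lead_coefE size_shift => ->; rewrite subrr.
by rewrite !nth_default ?subrr // ?size_shift -(prednK (ltnW g_gt1)).
Qed.

Lemma comp_XsubC1_sub_neq0 g : (1 < size g)%N -> g \Po ('X - 1) - g != 0.
Proof.
move=> g_gt1; apply/negP; rewrite subr_eq0 => /eqP g_periodic.
have g_const k : g.[- k%:R] = g.[0].
  elim: k => [|k IH]; first by rewrite oppr0.
  by rewrite -IH -{2}g_periodic horner_comp hornerXsubC -natr1 opprD.
set h := g - (g.[0])%:P.
have h_neq0 : h != 0.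
  apply: contraTneq g_gt1 => /eqP; rewrite subr_eq0 => /eqP ->.
  by rewrite -leqNgt size_polyC_leq1.
have size_h : (size h <= size g)%N.
  rewrite (leq_trans (size_polyD _ _)) // size_polyN geq_max leqnn /=.
  by rewrite (leq_trans (size_polyC_leq1 _)) // ltnW.
set rs := [seq - (k%:R : K) | k <- iota 0 (size g)].
have roots_h : all (root h) rs.
  by apply/allP => _ /mapP[k _ ->]; rewrite /root /h !hornerE g_const subrr.
have uniq_rs : uniq rs.
  by rewrite map_inj_uniq ?iota_uniq // => a b /oppr_inj /eqP; rewrite eqr_nat => /eqP.
have := max_poly_roots h_neq0 roots_h uniq_rs.
by rewrite size_map size_iota ltnNge size_h.
Qed.

End BackwardDifference.

Lemma closed_irreducible_size (K : closedFieldType) (p : {poly K}) :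
  irreducible_poly p -> size p = 2.
Proof.
case=> p_gt1 p_irr.
have /closed_rootP [x px] : size p != 1 by rewrite neq_ltn p_gt1 orbT.
by rewrite -(eqp_size (p_irr ('X - x%:P) _ _)) ?size_XsubC // dvdp_XsubCl.
Qed.

Section Casimir.
Variables (K : comNzRingType) (V : lmodType K) (E F H : {linear V -> V}) (u : {poly K}).
Hypotheses (hHE : forall v, H (E v) - E (H v) = E v)
  (hHF : forall v, H (F v) - F (H v) = - F v).
Local Notation Om := (Omega E F H u).

Lemma Omega_is_linear : linear Om.
Proof.
by move=> a x y; rewrite /Omega !linearP /= !scalerA [a * _]mulrC addrACA.
Qed.

HB.instance Definition _ :=
  GRing.isLinear.Build K V V *:%R Om Omega_is_linear.

Lemma submod_Omega N x : submod E F H N -> N x -> N (Om x).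
Proof.
move=> [N0 ND NZ NEFH] Nx; have [NEx _ _] := NEFH x Nx; have [_ NFEx _] := NEFH _ NEx.
apply: (ND); first exact: NZ.
by apply: pact_stable => // y Ny; have [] := NEFH y Ny.
Qed.

Lemma submod_pact_Omega N q x : submod E F H N -> N x -> N (pact Om q x).
Proof.
move=> hN Nx; have [N0 ND NZ _] := hN.
by apply: pact_stable => // y; exact: submod_Omega.
Qed.

Lemma E_H x : E (H x) = H (E x) - E x.
Proof. by rewrite -[X in _ - X](hHE x) subKr. Qed.

Lemma F_H x : F (H x) = H (F x) + F x.
Proof. by rewrite -[X in _ + X]opprK -hHF subKr. Qed.

Lemma E_pactH g x : E (pact H g x) = pact H (g \Po ('X - 1)) (E x).
Proof. by rewrite pact_comp; apply: pact_intertwine => y; rewrite pactB pactX pact1 E_H. Qed.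

Lemma F_pactH g x : F (pact H g x) = pact H (g \Po ('X + 1)) (F x).
Proof. by rewrite pact_comp; apply: pact_intertwine => y; rewrite pactD pactX pact1 F_H. Qed.

Lemma Omega_commH x : H (Om x) = Om (H x).
Proof.
rewrite /Omega linearD linearZZ (@pact_intertwine _ _ H H H) //.
by rewrite E_H linearB F_H addrK.
Qed.

End Casimir.

Section CasimirCentral.
Variables (K : fieldType) (V : lmodType K) (E F H : {linear V -> V}) (f u : {poly K}).
Hypotheses (two_neq0 : 2%:R != 0 :> K) (hu : f = 2%:R^-1 *: (u \Po ('X + 1) - u))
  (hEF : forall v, E (F v) - F (E v) = pact H f v)
  (hHE : forall v, H (E v) - E (H v) = E v)
  (hHF : forall v, H (F v) - F (H v) = - F v).
Local Notation Om := (Omega E F H u).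

Lemma Omega_EF x : Om x = 2%:R *: E (F x) + pact H u x.
Proof.
rewrite /Omega; have -> : u \Po ('X + 1) = 2%:R *: f + u.
  by rewrite hu scalerA mulfV // scale1r subrK.
by rewrite pactD pactZ addrA -scalerDr -hEF subrKC.
Qed.

(* Expand Omega as 2FE + u(H+1) on one side and as 2EF + u(H) on the other. *)
Lemma Omega_commE x : E (Om x) = Om (E x).
Proof.
rewrite {1}/Omega linearD linearZZ (E_pactH hHE) Omega_EF.
by have := comp_polyXaddC_K u 1; rewrite polyC1 => ->.
Qed.

Lemma Omega_commF x : F (Om x) = Om (F x).
Proof. by rewrite Omega_EF linearD linearZZ (F_pactH hHF). Qed.

End CasimirCentral.

Section WhittakerModule.
Variables (K : numClosedFieldType) (f u : {poly K}) (V : lmodType K) (E F H : {linear V -> V}).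
Hypotheses (hu : f = 2%:R^-1 *: (u \Po ('X + 1) - u))
  (hEF : forall v, E (F v) - F (E v) = pact H f v)
  (hHE : forall v, H (E v) - E (H v) = E v)
  (hHF : forall v, H (F v) - F (H v) = - F v).
Variables (eta : K) (w : V) (p : {poly K}) (n : nat).
Hypotheses (heta : eta != 0) (hw : E w = eta *: w) (hcyc : forall x, gensub E F H w x)
  (hp : irreducible_poly p) (hn : (1 <= n)%N)
  (hZ : forall q, (forall v, pact (Omega E F H u) q v = 0) <-> (p ^+ n %| q)).

Local Notation Om := (Omega E F H u).
Local Notation P := (pact Om p).

Let two_neq0 : 2%:R != 0 :> K. Proof. by rewrite pnatr_eq0. Qed.

Let P_commE x : P (E x) = E (P x).
Proof. by symmetry; apply: pact_intertwine; exact: Omega_commE two_neq0 hu hEF hHE. Qed.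

Let P_commF x : P (F x) = F (P x).
Proof. by symmetry; apply: pact_intertwine; exact: Omega_commF two_neq0 hu hEF hHF. Qed.

Let P_commH x : P (H x) = H (P x).
Proof. by symmetry; apply: pact_intertwine; exact: Omega_commH u hHE hHF. Qed.

Let pactH_commP q x : pact H q (P x) = P (pact H q x).
Proof. by apply: pact_comm; exact: Omega_commH u hHE hHF. Qed.

Let size_p : size p = 2 := closed_irreducible_size hp.

Lemma Omega_w : Om w = (p`_1)^-1 *: (P w - p`_0 *: w).
Proof.
have p1_neq0 : p`_1 != 0.
  have : lead_coef p != 0 by rewrite lead_coef_eq0 -size_poly_gt0 size_p.
  by rewrite lead_coefE size_p.
by rewrite pact_size2 ?size_p // [p`_0 *: w + _]addrC addrK scalerA mulVf ?scale1r.
Qed.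

Lemma F_w : F w = (2%:R * eta)^-1 *: (Om w - pact H (u \Po ('X + 1)) w).
Proof.
by rewrite /Omega addrK hw [F (_ *: _)]linearZZ !scalerA -mulrA mulVf ?scale1r // mulf_neq0.
Qed.

Lemma decomp_pactH_w_addr_P x : exists g v, x = pact H g w + P v.
Proof.
pose S y := exists g v, y = pact H g w + P v.
have S_add y z : S y -> S z -> S (y + z).
  by move=> [g [v ->]] [g' [v' ->]]; exists (g + g'), (v + v'); rewrite pactD linearD addrACA.
have S_scale a y : S y -> S (a *: y).
  by move=> [g [v ->]]; exists (a *: g), (a *: v); rewrite pactZ linearZZ scalerDr.
have S_pactH q y : S y -> S (pact H q y).
  by move=> [g [v ->]]; exists (q * g), (pact H q v); rewrite linearD /= pactM pactH_commP.
have S_P v : S (P v) by exists 0, v; rewrite pact0 add0r.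
have S_w : S w by exists 1, 0; rewrite pact1 linear0 addr0.
have S_Fw : S (F w).
  rewrite F_w Omega_w; apply/S_scale/S_add; last by rewrite -pactN; exact: S_pactH.
  by apply/S_scale/S_add; rewrite // -scaleNr; exact: S_scale.
have S_E y : S y -> S (E y).
  move=> [g [v ->]]; exists (eta *: (g \Po ('X - 1))), (E v).
  by rewrite linearD (E_pactH hHE) hw linearZZ pactZ P_commE.
have S_F y : S y -> S (F y).
  by move=> [g [v ->]]; rewrite linearD (F_pactH hHF) -P_commF; apply/S_add/S_P/S_pactH.
have S_H y : S y -> S (H y) by move=> /(S_pactH 'X); rewrite pactX.
have S_submod : submod E F H S.
  split=> //; first by exists 0, 0; rewrite pact0 linear0 addr0.
  by move=> y Sy; split; [exact: S_E | exact: S_F | exact: S_H].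
exact: hcyc x S S_submod S_w.
Qed.

Lemma E_sub_eta_pactH_w_addr_P g v :
  let x := pact H g w + P v in
  E x - eta *: x = pact H (eta *: (g \Po ('X - 1) - g)) w + P (E v - eta *: v).
Proof.
rewrite /= linearD (E_pactH hHE) hw -P_commE pactZ pactB [P (_ - _)]linearB /= !linearZZ /=.
by rewrite !scalerN scalerDr scalerBr opprD addrACA.
Qed.

Lemma w_in_submod_addr_P N g x v :
  submod E F H N -> N x -> x = pact H g w + P v -> g != 0 ->
  exists m v', N m /\ w = m + P v'.
Proof.
move=> hN Nx x_eq g_neq0; have [N0 ND NZ NEFH] := hN.
have [k size_g] := ubnP (size g).
elim: k => // k IH in g x v size_g Nx x_eq g_neq0 *.
have [size_g_le1 | size_g_gt1] := leqP (size g) 1.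
  have g_const := size1_polyC size_g_le1; set c := g`_0 in g_const.
  have c_neq0 : c != 0 by rewrite -polyC_eq0 -g_const.
  exists (c^-1 *: x), (- c^-1 *: v); split; first exact: NZ.
  by rewrite x_eq g_const pactC scalerDr scalerA mulVf // scale1r linearZZ scaleNr addrK.
apply: (IH (eta *: (g \Po ('X - 1) - g)) (E x - eta *: x) (E v - eta *: v)).
- apply: leq_ltn_trans (size_scale_leq _ _) _.
  by apply: leq_trans (size_comp_XsubC1_sub size_g_gt1) _; rewrite -ltnS.
- by apply: ND; [case: (NEFH x Nx) | rewrite -scaleNr; exact: NZ].
- by rewrite x_eq E_sub_eta_pactH_w_addr_P.
- by rewrite scale_poly_eq0 negb_or heta comp_XsubC1_sub_neq0.
Qed.

Let full_of_addr_P N : submod E F H N -> (forall x, exists m v, N m /\ x = m + P v) ->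
  forall x, N x.
Proof.
move=> hN; have [N0 ND _ _] := hN; apply: (addr_image_nilpotent_full (n := n)) => //.
- by move=> x; exact: submod_pact_Omega.
- by move=> v; rewrite -pactXn; exact: (hZ _).2 (dvdpp _) v.
Qed.

Lemma submod_full_of_notin_imP N x : submod E F H N -> N x -> ~ (exists v, x = P v) ->
  forall y, N y.
Proof.
move=> hN Nx x_notin; have [g [v x_eq]] := decomp_pactH_w_addr_P x.
have g_neq0 : g != 0.
  by apply/eqP => g0; apply: x_notin; exists v; rewrite x_eq g0 pact0 add0r.
have [m [v' [Nm w_eq]]] := w_in_submod_addr_P hN Nx x_eq g_neq0.
apply: (full_of_addr_P hN) => y.
by apply: hcyc y _ (submod_addr_image P_commE P_commF P_commH hN) _; exists m, v'.
Qed.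

Lemma gensub_Pw_iff x : gensub E F H (P w) x <-> exists v, x = P v.
Proof.
split=> [Pw_x | [v ->]].
  by apply: (Pw_x (fun y => exists v, y = P v));
    [exact: submod_image P_commE P_commF P_commH | exists w].
apply: (@hcyc v (fun y => gensub E F H (P w) (P y))) (fun M _ => id).
by have := submod_preimage P_commE P_commF P_commH (gensub_submod E F H (P w)).
Qed.

Lemma w_notin_imP : ~ exists v, w = P v.
Proof.
move=> w_in.
have V0 (x : V) : x = 0.
  apply: (full_of_addr_P (submod0 E F H)) => y.
  have [v ->] := @hcyc y _ (submod_image P_commE P_commF P_commH) w_in.
  by exists 0, v; rewrite add0r.
have : p ^+ n %| 1 by apply/hZ => v; rewrite pact1.
by move/(dvdp_trans (dvdp_exp hn (dvdpp p))); rewrite dvdp1 size_p.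
Qed.

Lemma submod_sub_imP_or_full N : submod E F H N ->
  (forall x, N x -> exists v, x = P v) \/ (forall x, N x).
Proof.
move=> hN; have [[x Nx x_notin] | no_x] :=
  classic (exists2 x, N x & ~ exists v, x = P v).
  by right; exact: submod_full_of_notin_imP hN Nx x_notin.
by left => x Nx; apply: NNPP => x_notin; apply: no_x; exists x.
Qed.

Theorem Whittaker_unique_maxsub :
  maxsub E F H (gensub E F H (P w)) /\
  (forall M, maxsub E F H M -> forall x, M x <-> gensub E F H (P w) x).
Proof.
apply: maxsub_unique; first exact: gensub_submod.
  by exists w => /gensub_Pw_iff; exact: w_notin_imP.
move=> N /submod_sub_imP_or_full [N_sub | N_full]; last by right.
by left => x /N_sub /gensub_Pw_iff.
Qed.

End WhittakerModule.

Local Open Scope complex_scope.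

Theorem mainTheorem12 (Rr : realType) (f u : {poly Rr[i]})
  (hu : f = 2%:R^-1 *: (u \Po ('X + 1) - u))
  (V : lmodType Rr[i]) (E F H : {linear V -> V})
  (hEF : forall v, E (F v) - F (E v) = pact H f v)
  (hHE : forall v, H (E v) - E (H v) = E v)
  (hHF : forall v, H (F v) - F (H v) = - F v)
  (eta : Rr[i]) (heta : eta != 0) (w : V)
  (hw : E w = eta *: w)
  (hcyc : forall x, gensub E F H w x)
  (p : {poly Rr[i]}) (hp : irreducible_poly p) (n : nat) (hn : (1 <= n)%N)
  (hZ : forall q : {poly Rr[i]},
          (forall v, pact (Omega E F H u) q v = 0) <-> (p ^+ n %| q)) :
  maxsub E F H (gensub E F H (pact (Omega E F H u) p w)) /\
  (forall M, maxsub E F H M ->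
     forall x, M x <-> gensub E F H (pact (Omega E F H u) p w) x).
Proof. exact: (Whittaker_unique_maxsub (K := Rr[i]) hu hEF hHE hHF heta hw hcyc hp hn hZ). Qed.
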